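(* For every integer $n\ge 3$, the complete graph $K_n$ satisfies $\mathrm{ppn}(K_n)=\lceil \log_2(n)\rceil - 1$.
   Context: A $k$-prime product distance labeling of a finite graph $G$ (for a positive integer $k$) is an injective map $L:V(G)\to\mathbb{Z}$ such that $|L(u)-L(v)|>1$ for all distinct vertices $u,v$ of $G$, and such that for every pair of adjacent vertices $u,v$ the integer $|L(u)-L(v)|$ has at most $k$ prime factors counted with multiplicity. $G$ is a $k$-prime product graph if it has such a labeling. The prime product number $\mathrm{ppn}(G)$ is the integer $k$ such that $G$ is a $k$-prime product graph but not a $(k-1)$-prime product graph (equivalently, the least such $k$). *)

From mathcomp Require Import all_boot all_order all_algebra.
Set Implicit Arguments. Unset Strict Implicit. Unset Printing Implicit Defensive.
Import Order.TTheory GRing.Theory Num.Theory.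

Definition bigomega (m : nat) : nat := \sum_(p <- primes m) logn p m.

(* A simple graph: vertex type T : finType with symmetric irreflexive edge relation e. *)
Definition kpp_labeling (T : finType) (e : rel T) (k : nat) (L : T -> int) : Prop :=
  injective L /\
  (forall u v : T, u != v -> (1 < `|L u - L v|)%N) /\
  (forall u v : T, e u v -> (bigomega `|L u - L v| <= k)%N).

Definition kpp_graph (T : finType) (e : rel T) (k : nat) : Prop :=
  exists L : T -> int, kpp_labeling e k L.

Definition is_ppn (T : finType) (e : rel T) (k : nat) : Prop :=
  (0 < k)%N /\ kpp_graph e k /\ (forall j : nat, (0 < j)%N -> kpp_graph e j -> (k <= j)%N).

Definition complete_graph (n : nat) : rel 'I_n := fun u v => u != v.

From mathcomp Require Import all_boot all_order all_algebra zify.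
Import Order.TTheory GRing.Theory Num.Theory.

Set Implicit Arguments.
Unset Strict Implicit.
Unset Printing Implicit Defensive.

(* Upper bound: with k := ceil(log2 n) - 1, label i < 2^(k+1) by 2i below 2^k and
   by 2i + 1 from 2^k on.  Two labels in the same half differ by 2t with
   t < 2^k, so the difference has at most k prime factors; labels in different
   halves differ by an odd number below 2^(k+2) <= 3^(k+1), whose prime factors
   are all >= 3, so again at most k of them.
   Lower bound: in a j-labeling of K_n no two labels agree modulo 2^(j+1), since
   their difference would have at least j+1 factors 2; hence n <= 2^(j+1). *)

Lemma leq_expn_bigomega b m : (0 < m)%N ->
  (forall p, prime p -> (p %| m)%N -> (b <= p)%N) -> (b ^ bigomega m <= m)%N.
Proof.
move=> m_gt0 b_le_pdiv.
rewrite {2}(prod_prime_decomp m_gt0) prime_decompE big_map /bigomega expn_sum.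
rewrite !big_seq; apply: leq_prod => p; rewrite mem_primes => /and3P[p_pr _ p_dvd].
have b_le := b_le_pdiv p p_pr p_dvd.
by elim: (logn p m) => [//|e IH]; rewrite !expnS leq_mul.
Qed.

Lemma bigomega_leq b m e : (1 < b)%N -> (0 < m)%N ->
  (forall p, prime p -> (p %| m)%N -> (b <= p)%N) -> (m < b ^ e.+1)%N ->
  (bigomega m <= e)%N.
Proof.
move=> b_gt1 m_gt0 b_le_pdiv m_lt.
by rewrite -ltnS -(ltn_exp2l _ _ b_gt1) (leq_ltn_trans (leq_expn_bigomega m_gt0 b_le_pdiv)).
Qed.

Lemma logn_leq_bigomega p m : (logn p m <= bigomega m)%N.
Proof.
have [p_primes | p_primes] := boolP (p \in primes m).
  by rewrite /bigomega (big_rem _ p_primes) leq_addr.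
by rewrite -logn_gt0 -eqn0Ngt in p_primes; rewrite (eqP p_primes).
Qed.

Lemma pfactor_dvdn_bigomega p j m : prime p -> (0 < m)%N ->
  (p ^ j %| m)%N -> (j <= bigomega m)%N.
Proof.
move=> p_pr m_gt0; rewrite pfactor_dvdn // => /leq_trans; apply.
exact: logn_leq_bigomega.
Qed.

Lemma bigomega_double k t : (0 < t)%N -> (t < 2 ^ k)%N -> (bigomega (2 * t) <= k)%N.
Proof.
move=> t_gt0 t_lt; apply: (@bigomega_leq 2); rewrite ?muln_gt0 ?t_gt0 //.
  by move=> p /prime_gt1.
by rewrite expnS ltn_pmul2l.
Qed.

Lemma expn2_leq_expn3 k : (0 < k)%N -> (2 ^ k.+2 <= 3 ^ k.+1)%N.
Proof.
case: k => // k _; elim: k => [//|k IH].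
by rewrite [X in (X <= _)%N]expnS [X in (_ <= X)%N]expnS leq_mul.
Qed.

Lemma bigomega_odd k t : (0 < k)%N -> (t < 2 ^ k.+1)%N ->
  (bigomega (2 * t).+1 <= k)%N.
Proof.
move=> k_gt0 t_lt; apply: (@bigomega_leq 3) => // [p p_pr p_dvd|].
  have p_odd : odd p by apply: dvdn_odd p_dvd _; rewrite /= oddM.
  by have := prime_gt1 p_pr; case: p p_odd {p_pr p_dvd} => [|[|[]]].
by have := expn2_leq_expn3 k_gt0; rewrite !expnS in t_lt *; lia.
Qed.

Definition halves_label (k i : nat) : int := (2 * i + (2 ^ k <= i))%N.

Lemma halves_label_lt k u v : (0 < k)%N -> (u < v)%N -> (v < 2 ^ k.+1)%N ->
  let d := `|halves_label k u - halves_label k v|%N in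
  (1 < d)%N /\ (bigomega d <= k)%N.
Proof.
move=> k_gt0 uv v_lt /=; rewrite /halves_label distnEr; last by lia.
have t_lt : (v - u < 2 ^ k.+1)%N by lia.
case: (leqP (2 ^ k) u) => hu; case: (leqP (2 ^ k) v) => hv /=; try lia.
- have -> : (2 * v + 1 - (2 * u + 1) = 2 * (v - u))%N by lia.
  by split; [lia | apply: bigomega_double; rewrite expnS in v_lt; lia].
- have -> : (2 * v + 1 - (2 * u + 0) = (2 * (v - u)).+1)%N by lia.
  by split; [lia | apply: bigomega_odd].
- have -> : (2 * v + 0 - (2 * u + 0) = 2 * (v - u))%N by lia.
  by split; [lia | apply: bigomega_double; lia].
Qed.

Lemma halves_label_neq k u v : (0 < k)%N -> u != v ->
  (u < 2 ^ k.+1)%N -> (v < 2 ^ k.+1)%N ->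
  let d := `|halves_label k u - halves_label k v|%N in
  (1 < d)%N /\ (bigomega d <= k)%N.
Proof.
move=> k_gt0; wlog uv : u v / (u < v)%N => [hwlog|_ _ v_lt]; last first.
  exact: halves_label_lt.
rewrite neq_ltn => /orP[uv|vu] u_lt v_lt; first by apply: hwlog; rewrite ?ltn_eqF.
by rewrite /= distnC; apply: hwlog; rewrite ?ltn_eqF.
Qed.

Lemma kpp_complete_graph n k : (0 < k)%N -> (n <= 2 ^ k.+1)%N ->
  kpp_graph (@complete_graph n) k.
Proof.
move=> k_gt0 n_le; have lt_pow (u : 'I_n) := leq_trans (ltn_ord u) n_le.
have label_ok (u v : 'I_n) (uv : u != v) := halves_label_neq k_gt0 uv (lt_pow u) (lt_pow v).
exists (fun i : 'I_n => halves_label k i); split; [|split].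
- move=> u v; apply: contra_eq => /label_ok[+ _] /=.
  by apply: contraTneq => ->; rewrite subrr.
- by move=> u v /label_ok[].
- by move=> u v /label_ok[].
Qed.

Lemma card_kpp_complete (T : finType) (e : rel T) p j : prime p ->
  (forall u v, u != v -> e u v) -> kpp_graph e j -> (#|T| <= p ^ j.+1)%N.
Proof.
move=> p_pr e_complete [L [_ [L_sep L_omega]]].
set M := (p ^ j.+1)%N; have M_gt0 : (0 < M)%N by rewrite expn_gt0 prime_gt0.
have M_neq0 : Posz M != 0 by rewrite eqz_nat -lt0n.
have res_lt i : (absz (L i %% M)%Z < M)%N.
  by have := modz_ge0 (L i) M_neq0; have := @ltz_pmod (L i) M M_gt0; lia.
suff res_inj : injective (fun i => Ordinal (res_lt i)).
  by have := leq_card _ res_inj; rewrite card_ord.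
move=> u v /(congr1 val) /= res_eq; apply/eqP; apply: contraT => uv.
have : (Posz M %| (L u - L v)%R)%Z.
  rewrite -eqz_mod_dvd; apply/eqP.
  by have := modz_ge0 (L u) M_neq0; have := modz_ge0 (L v) M_neq0; lia.
rewrite dvdzE /= => M_dvd.
have := L_omega u v (e_complete u v uv).
by rewrite leqNgt (pfactor_dvdn_bigomega p_pr _ M_dvd) // (ltn_trans _ (L_sep u v uv)).
Qed.

Theorem mainTheorem3 (n : nat) (hn : (3 <= n)%N) :
  is_ppn (@complete_graph n) (up_log 2 n).-1.
Proof.
set k := (up_log 2 n).-1.
have up_log_eq : up_log 2 n = k.+1 by rewrite prednK // up_log_gt0 (ltn_trans _ hn).
have n_le : (n <= 2 ^ k.+1)%N by rewrite -up_log_eq up_logP.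
have k_gt0 : (0 < k)%N.
  by rewrite lt0n; apply: contraTneq n_le => ->; rewrite -ltnNge.
split; [exact: k_gt0 | split; first exact: kpp_complete_graph].
move=> j _ kpp_j; rewrite -ltnS -up_log_eq up_log_min //.
by have := card_kpp_complete (isT : prime 2) (fun u v uv => uv) kpp_j; rewrite card_ord.
Qed.
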